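(* For fixed positive integer $t$, the two-variable function $(\rho,k)\mapsto\tilde L_0(\rho,k,t)$ (on $1<\rho<t$, $k>0$) has partial derivatives \[ \frac{\partial}{\partial k}\tilde L_0(\rho,k,t)=\frac{\rho-1}{k}\quad\text{and}\quad \frac{\partial}{\partial\rho}\tilde L_0(\rho,k,t)=\log(\rho k)-y_t(\rho). \]
   Context: $d_i=2^{\binom i2}i!$. For positive integer $t$ and real $1<\rho<t$, $x_t(\rho),y_t(\rho)$ denote the unique reals $x,y$ with $\sum_{i=1}^t e^{x+iy}d_i^{-1}=1$ and $\sum_{i=1}^t ie^{x+iy}d_i^{-1}=\rho$. $\tilde P_{\rho,t}=\{(p_i)_{i=1}^t\in[0,1]^t:\sum_ip_i=1,\sum_iip_i=\rho\}$, and $\tilde L_0(\rho,k,t)=\sup_{\mathbf p\in\tilde P_{\rho,t}}\{\rho\log(\rho k)-\log k-\rho+1-\sum_ip_i\log(p_id_i)\}$ (with $0\log0=0$). Logarithms are natural. *)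

From Stdlib Require Import Reals ClassicalEpsilon Factorial Binomial.
From Coquelicot Require Import Coquelicot.
Open Scope R_scope.

Definition dd (i : nat) : R :=
  2 ^ (Nat.div (i * (i - 1)) 2) * INR (Factorial.fact i).

Definition xy_eqs (t : nat) (rho : R) (xy : R * R) : Prop :=
  sum_n_m (fun i => exp (fst xy + INR i * snd xy) / dd i) 1 t = 1 /\
  sum_n_m (fun i => INR i * exp (fst xy + INR i * snd xy) / dd i) 1 t = rho.

(* the (by hypothesis unique) solution, picked by choice *)
Definition xy_t (t : nat) (rho : R) : R * R :=
  epsilon (inhabits (0, 0)) (xy_eqs t rho).
Definition x_t (t : nat) (rho : R) : R := fst (xy_t t rho).
Definition y_t (t : nat) (rho : R) : R := snd (xy_t t rho).

(* tilde P_{rho,t}: p indexed by 1..t (values outside irrelevant) *)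
Definition Ptilde (rho : R) (t : nat) (p : nat -> R) : Prop :=
  (forall i, (1 <= i <= t)%nat -> 0 <= p i <= 1) /\
  sum_n_m p 1 t = 1 /\
  sum_n_m (fun i => INR i * p i) 1 t = rho.

Definition plogpd (p d : R) : R :=
  if Req_EM_T p 0 then 0 else p * ln (p * d).

Definition L0_objective (rho k : R) (t : nat) (p : nat -> R) : R :=
  rho * ln (rho * k) - ln k - rho + 1 - sum_n_m (fun i => plogpd (p i) (dd i)) 1 t.

Definition L0 (rho k : R) (t : nat) : R :=
  real (Lub_Rbar (fun v => exists p, Ptilde rho t p /\ v = L0_objective rho k t p)).

From Stdlib Require Import Reals Lra Lia Arith ClassicalEpsilon.
From Coquelicot Require Import Coquelicot.
Open Scope R_scope.

(* Gibbs' inequality: if [sum_i exp (x + i y) / d_i = 1], then every [p] in [Ptilde r t]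
   satisfies [sum_i p_i ln (p_i d_i) >= x + r y], with equality for the Gibbs weights
   [p_i = exp (x + i y) / d_i] when their mean is [r].  For [(x, y) = (x_t rho, y_t rho)] this
   gives [L0 rho k t = rho ln (rho k) - ln k - rho + 1 - (x + rho y)], whence the
   [k]-derivative.  For [r] near [rho], [L0 r k t] lies between the objective at the Gibbs
   weights with a little mass moved between [i = 1] and [i = t] (to give mean [r]) and the
   Gibbs bound [... - (x + r y)] for the fixed [(x, y)]; both touch [L0] at [rho] with slope
   [ln (rho k) - y]. *)

Lemma sum_n_m_plus_R (u v : nat -> R) n m :
  sum_n_m (fun k => u k + v k) n m = sum_n_m u n m + sum_n_m v n m.
Proof. exact (sum_n_m_plus u v n m). Qed.

Lemma sum_n_m_mult_l_R (a : R) (u : nat -> R) n m :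
  sum_n_m (fun k => a * u k) n m = a * sum_n_m u n m.
Proof. exact (sum_n_m_mult_l a u n m). Qed.

Lemma sum_n_m_const_zero_R n m : sum_n_m (fun _ => 0) n m = 0.
Proof. exact (sum_n_m_const_zero n m). Qed.

Lemma sum_n_m_le_loc (a b : nat -> R) n m :
  (forall k, (n <= k <= m)%nat -> a k <= b k) -> sum_n_m a n m <= sum_n_m b n m.
Proof.
  intros hab.
  rewrite (sum_n_m_ext_loc a (fun k => Rmin (a k) (b k)))
    by (intros k hk; rewrite Rmin_left; auto).
  apply sum_n_m_le; intros; apply Rmin_r.
Qed.

Lemma sum_n_m_nonneg (a : nat -> R) n m :
  (forall k, (n <= k <= m)%nat -> 0 <= a k) -> 0 <= sum_n_m a n m.
Proof.
  intros ha.
  rewrite <- (sum_n_m_const_zero_R n m). exact (sum_n_m_le_loc _ _ n m ha).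
Qed.

Lemma sum_n_m_term_le (a : nat -> R) n m i :
  (forall k, (n <= k <= m)%nat -> 0 <= a k) -> (n <= i <= m)%nat ->
  a i <= sum_n_m a n m.
Proof.
  intros ha hi.
  rewrite (sum_n_m_Chasles a n i m) by lia.
  assert (0 <= sum_n_m a (S i) m) by (apply sum_n_m_nonneg; intros; apply ha; lia).
  assert (a i <= sum_n_m a n i).
  { destruct (Nat.eq_dec n i) as [<-|hni]; [rewrite sum_n_n; lra|].
    destruct i as [|j]; [lia|].
    rewrite sum_n_Sm by lia.
    assert (0 <= sum_n_m a n j) by (apply sum_n_m_nonneg; intros; apply ha; lia).
    change (plus ?x ?y) with (x + y). lra. }
  change (plus ?x ?y) with (x + y). lra.
Qed.

Lemma sum_n_m_endpoints (a : nat -> R) n m :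
  (n < m)%nat -> (forall k, (n < k < m)%nat -> a k = 0) ->
  sum_n_m a n m = a n + a m.
Proof.
  intros hnm ha. destruct m as [|m]; [lia|].
  rewrite sum_n_Sm, sum_Sn_m by lia.
  rewrite (sum_n_m_ext_loc a (fun _ => 0)) by (intros; apply ha; lia).
  rewrite sum_n_m_const_zero_R. unfold plus; simpl. ring.
Qed.

Lemma is_derive_sum_n_m (f : nat -> R -> R) (df : nat -> R) n m x :
  (forall i, (n <= i <= m)%nat -> is_derive (f i) x (df i)) ->
  is_derive (fun y => sum_n_m (fun i => f i y) n m) x (sum_n_m df n m).
Proof.
  assert (empty : forall m', (m' < n)%nat ->
    is_derive (fun y => sum_n_m (fun i => f i y) n m') x (sum_n_m df n m')).
  { intros m' hm. rewrite sum_n_m_zero by lia.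
    apply (is_derive_ext (fun _ => 0)); [intros; rewrite sum_n_m_zero by lia; reflexivity|].
    apply (is_derive_const 0). }
  assert (single : (forall i, (n <= i <= n)%nat -> is_derive (f i) x (df i)) ->
    is_derive (fun y => sum_n_m (fun i => f i y) n n) x (sum_n_m df n n)).
  { intros hf. rewrite sum_n_n.
    apply (is_derive_ext (f n)); [intros; rewrite sum_n_n; reflexivity|].
    apply hf; lia. }
  induction m as [|m IH]; intros hf.
  - destruct n as [|n]; [exact (single hf)|apply empty; lia].
  - destruct (lt_eq_lt_dec (S m) n) as [[hlt|<-]|hgt]; [apply empty; lia|exact (single hf)|].
    rewrite sum_n_Sm by lia.
    apply (is_derive_ext (fun y => sum_n_m (fun i => f i y) n m + f (S m) y));
      [intros; rewrite sum_n_Sm by lia; reflexivity|].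
    apply (is_derive_plus (fun y => sum_n_m (fun i => f i y) n m) (f (S m))).
    + apply IH; intros; apply hf; lia.
    + apply hf; lia.
Qed.

Lemma is_derive_dominated_zero (g u : R -> R) x d :
  0 < d -> (forall y, Rabs (y - x) < d -> Rabs (g y - g x) <= Rabs (u y - u x)) ->
  is_derive u x 0 -> is_derive g x 0.
Proof.
  intros hd hgu hu. apply is_derive_Reals in hu. apply is_derive_Reals.
  intros eps heps. destruct (hu eps heps) as [d' hd'].
  exists (mkposreal _ (Rmin_pos _ _ hd (cond_pos d'))). simpl. intros h hh0 hh.
  specialize (hd' h hh0 (Rlt_le_trans _ _ _ hh (Rmin_r _ _))).
  rewrite Rminus_0_r in *. unfold Rdiv in *. rewrite Rabs_mult in *.
  eapply Rle_lt_trans; [|exact hd']. apply Rmult_le_compat_r; [apply Rabs_pos|].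
  apply hgu. replace (x + h - x) with h by ring. exact (Rlt_le_trans _ _ _ hh (Rmin_l _ _)).
Qed.

Lemma is_derive_squeeze (f lo up : R -> R) x l d :
  0 < d -> (forall y, Rabs (y - x) < d -> lo y <= f y <= up y) ->
  lo x = f x -> up x = f x -> is_derive lo x l -> is_derive up x l ->
  is_derive f x l.
Proof.
  intros hd hb hlo hup dlo dup.
  assert (dgap : is_derive (fun y => f y - lo y) x 0).
  { apply (is_derive_dominated_zero _ (fun y => up y - lo y) x d hd).
    - intros y hy. specialize (hb y hy).
      rewrite hlo, hup, !Rminus_diag, !Rminus_0_r, !Rabs_right; lra.
    - replace 0 with (l - l) by ring. exact (is_derive_minus _ _ _ _ _ dup dlo). }
  apply (is_derive_ext (fun y => lo y + (f y - lo y))); [intros y; simpl; ring|].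
  replace l with (l + 0) by ring. exact (is_derive_plus _ _ _ _ _ dlo dgap).
Qed.

Lemma is_derive_plogpd (g : R -> R) x dg d :
  is_derive g x dg -> 0 < g x -> 0 < d ->
  is_derive (fun y => plogpd (g y) d) x (dg * (ln (g x * d) + 1)).
Proof.
  intros hg hpos hd.
  apply (is_derive_ext_loc (fun y => g y * ln (g y * d))).
  - assert (hnear : locally x (fun y => 0 < g y)).
    { apply (ex_derive_continuous g x (ex_intro _ dg hg)). exact (open_gt 0 (g x) hpos). }
    revert hnear; apply filter_imp; intros y hy. unfold plogpd.
    destruct (Req_EM_T (g y) 0); [lra|reflexivity].
  - auto_derive.
    + assert (ex_derive g x) by (exists dg; exact hg). repeat split; auto. nra.
    + match goal with |- context [Derive ?h x] => rewrite (is_derive_unique h x dg hg) end.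
      field. nra.
Qed.

Lemma real_Lub_Rbar_image_between {A : Type} (P : A -> Prop) (obj : A -> R) lo up a0 :
  (forall a, P a -> obj a <= up) -> P a0 -> lo <= obj a0 ->
  lo <= real (Lub_Rbar (fun v => exists a, P a /\ v = obj a)) <= up.
Proof.
  intros hup ha0 hlo.
  destruct (Lub_Rbar_correct (fun v => exists a, P a /\ v = obj a)) as [ub lub].
  assert (h1 : Rbar_le (obj a0) (Lub_Rbar (fun v => exists a, P a /\ v = obj a)))
    by (apply ub; exists a0; auto).
  assert (h2 : Rbar_le (Lub_Rbar (fun v => exists a, P a /\ v = obj a)) up)
    by (apply lub; intros v [a [ha ->]]; apply hup; auto).
  destruct (Lub_Rbar _) as [l| |]; simpl in *; try contradiction. lra.
Qed.

Lemma dd_pos i : 0 < dd i.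
Proof. apply Rmult_lt_0_compat; [apply pow_lt; lra|apply INR_fact_lt_0]. Qed.

Definition gibbs (x y : R) (i : nat) : R := exp (x + INR i * y) / dd i.

Lemma gibbs_pos x y i : 0 < gibbs x y i.
Proof. apply Rdiv_lt_0_compat; [apply exp_pos|apply dd_pos]. Qed.

Lemma xy_eqs_gibbs t rho x y :
  xy_eqs t rho (x, y) <->
  sum_n_m (gibbs x y) 1 t = 1 /\ sum_n_m (fun i => INR i * gibbs x y i) 1 t = rho.
Proof.
  assert (e : sum_n_m (fun i => INR i * gibbs x y i) 1 t
              = sum_n_m (fun i => INR i * exp (x + INR i * y) / dd i) 1 t)
    by (apply sum_n_m_ext; intros i; unfold gibbs, Rdiv; simpl; ring).
  unfold xy_eqs. simpl. rewrite e. reflexivity.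
Qed.

Definition neg_entropy (t : nat) (p : nat -> R) : R :=
  sum_n_m (fun i => plogpd (p i) (dd i)) 1 t.

Definition L0_lead (rho k : R) : R := rho * ln (rho * k) - ln k - rho + 1.

(* Fenchel--Young for [p |-> p ln (p d)]: equivalently [ln u <= u - 1] at [u = exp a / (p d)]. *)
Lemma plogpd_ge_linear p d a :
  0 <= p -> 0 < d -> p * a + p - exp a / d <= plogpd p d.
Proof.
  intros hp hd. unfold plogpd. destruct (Req_EM_T p 0) as [->|hp0].
  - assert (0 < exp a / d) by (apply Rdiv_lt_0_compat; [apply exp_pos|lra]). lra.
  - assert (hpd : 0 < p * d) by nra.
    assert (hu : 0 < exp a / (p * d)) by (apply Rdiv_lt_0_compat; [apply exp_pos|exact hpd]).
    pose proof (exp_ineq1_le (ln (exp a / (p * d)))) as hln.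
    rewrite exp_ln in hln by exact hu.
    rewrite ln_div, ln_exp in hln by (try apply exp_pos; exact hpd).
    replace (exp a / d) with (p * (exp a / (p * d))) by (field; lra).
    nra.
Qed.

Lemma plogpd_exp d a : 0 < d -> plogpd (exp a / d) d = exp a / d * a.
Proof.
  intros hd. unfold plogpd. destruct (Req_EM_T (exp a / d) 0) as [h0|_].
  - exfalso. assert (0 < exp a / d) by (apply Rdiv_lt_0_compat; [apply exp_pos|exact hd]). lra.
  - replace (exp a / d * d) with (exp a) by (field; lra). rewrite ln_exp. reflexivity.
Qed.

Lemma neg_entropy_ge t r p x y :
  Ptilde r t p -> sum_n_m (gibbs x y) 1 t = 1 -> x + r * y <= neg_entropy t p.
Proof.
  intros [hp01 [hsum hmean]] hq.
  eapply Rle_trans; [|apply (sum_n_m_le_loc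
    (fun i => x * p i + y * (INR i * p i) + (p i + -1 * gibbs x y i)))].
  - rewrite !sum_n_m_plus_R, !sum_n_m_mult_l_R, hsum, hmean, hq. lra.
  - intros i hi. pose proof (plogpd_ge_linear (p i) (dd i) (x + INR i * y)
      (proj1 (hp01 i hi)) (dd_pos i)). unfold gibbs. lra.
Qed.

Lemma neg_entropy_gibbs t rho x y :
  xy_eqs t rho (x, y) -> neg_entropy t (gibbs x y) = x + rho * y.
Proof.
  intros hxy. destruct (proj1 (xy_eqs_gibbs t rho x y) hxy) as [hsum hmean].
  unfold neg_entropy.
  rewrite (sum_n_m_ext _ (fun i => x * gibbs x y i + y * (INR i * gibbs x y i))).
  - rewrite sum_n_m_plus_R, !sum_n_m_mult_l_R, hsum, hmean. ring.
  - intros i; simpl. unfold gibbs. rewrite plogpd_exp by apply dd_pos. ring.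
Qed.

Lemma Ptilde_of_pos r t p :
  (forall i, (1 <= i <= t)%nat -> 0 < p i) ->
  sum_n_m p 1 t = 1 -> sum_n_m (fun i => INR i * p i) 1 t = r -> Ptilde r t p.
Proof.
  intros hpos hsum hmean. split; [|split; assumption].
  intros i hi. split; [left; auto|].
  rewrite <- hsum. apply sum_n_m_term_le; [intros; left|]; auto.
Qed.

Lemma L0_between t r k p x y :
  Ptilde r t p -> sum_n_m (gibbs x y) 1 t = 1 ->
  L0_lead r k - neg_entropy t p <= L0 r k t <= L0_lead r k - (x + r * y).
Proof.
  intros hp hq. unfold L0.
  apply (real_Lub_Rbar_image_between (Ptilde r t) (L0_objective r k t) _ _ p);
    [|exact hp|apply Rle_refl].
  intros p' hp'. pose proof (neg_entropy_ge t r p' x y hp' hq).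
  unfold L0_objective. fold (neg_entropy t p'). unfold L0_lead. lra.
Qed.

Lemma L0_at_solution t rho k x y :
  xy_eqs t rho (x, y) -> L0 rho k t = L0_lead rho k - (x + rho * y).
Proof.
  intros hxy. destruct (proj1 (xy_eqs_gibbs t rho x y) hxy) as [hsum hmean].
  assert (hP : Ptilde rho t (gibbs x y))
    by (apply Ptilde_of_pos; auto; intros; apply gibbs_pos).
  pose proof (L0_between t rho k _ x y hP hsum) as hbounds.
  rewrite (neg_entropy_gibbs t rho x y hxy) in hbounds. lra.
Qed.

Definition endpoint_shift (t i : nat) : R :=
  if Nat.eqb i t then / (INR t - 1) else if Nat.eqb i 1 then - / (INR t - 1) else 0.

Section EndpointShift.

Variable t : nat.
Hypothesis ht : (2 <= t)%nat.

Let t_ge2 : 2 <= INR t.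
Proof. replace 2 with (INR 2) by (simpl; ring). apply le_INR. exact ht. Qed.

Lemma endpoint_shift_1 : endpoint_shift t 1 = - / (INR t - 1).
Proof.
  unfold endpoint_shift.
  replace (Nat.eqb 1 t) with false by (symmetry; apply Nat.eqb_neq; lia). reflexivity.
Qed.

Lemma endpoint_shift_t : endpoint_shift t t = / (INR t - 1).
Proof. unfold endpoint_shift. rewrite Nat.eqb_refl. reflexivity. Qed.

Lemma endpoint_shift_inner i : (1 < i < t)%nat -> endpoint_shift t i = 0.
Proof.
  intros hi. unfold endpoint_shift.
  replace (Nat.eqb i t) with false by (symmetry; apply Nat.eqb_neq; lia).
  replace (Nat.eqb i 1) with false by (symmetry; apply Nat.eqb_neq; lia). reflexivity.
Qed.

Lemma sum_endpoint_shift : sum_n_m (endpoint_shift t) 1 t = 0.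
Proof.
  rewrite sum_n_m_endpoints; [|lia|exact endpoint_shift_inner].
  rewrite endpoint_shift_1, endpoint_shift_t. simpl. ring.
Qed.

Lemma mean_endpoint_shift : sum_n_m (fun i => INR i * endpoint_shift t i) 1 t = 1.
Proof.
  rewrite sum_n_m_endpoints;
    [|lia|intros i hi; simpl; rewrite endpoint_shift_inner; [ring|exact hi]].
  rewrite endpoint_shift_1, endpoint_shift_t. simpl. field. pose proof t_ge2. lra.
Qed.

Lemma endpoint_shift_abs_le1 i : Rabs (endpoint_shift t i) <= 1.
Proof.
  pose proof t_ge2.
  assert (0 < / (INR t - 1) <= 1).
  { split; [apply Rinv_0_lt_compat; lra|].
    apply Rle_trans with (/ 1); [apply Rinv_le_contravar|rewrite Rinv_1]; lra. }
  unfold endpoint_shift. destruct (Nat.eqb i t); [|destruct (Nat.eqb i 1)].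
  - rewrite Rabs_right; lra.
  - rewrite Rabs_Ropp, Rabs_right; lra.
  - rewrite Rabs_R0; lra.
Qed.

End EndpointShift.

Section ShiftedGibbs.

Variables (t : nat) (rho x y : R).
Hypothesis ht : (2 <= t)%nat.
Hypothesis hsol : xy_eqs t rho (x, y).

Definition shifted_gibbs (r : R) (i : nat) : R :=
  gibbs x y i + (r - rho) * endpoint_shift t i.

Lemma shifted_gibbs_rho i : shifted_gibbs rho i = gibbs x y i.
Proof. unfold shifted_gibbs. rewrite Rminus_diag. ring. Qed.

Lemma shifted_gibbs_pos :
  exists d, 0 < d /\ forall r, Rabs (r - rho) < d -> forall i, 0 < shifted_gibbs r i.
Proof.
  exists (Rmin (gibbs x y 1) (gibbs x y t)).
  split; [apply Rmin_pos; apply gibbs_pos|]. intros r hr i.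
  assert (hshift : Rabs ((r - rho) * endpoint_shift t i) < gibbs x y i
                   \/ endpoint_shift t i = 0).
  { assert (hle : Rabs ((r - rho) * endpoint_shift t i) <= Rabs (r - rho)).
    { rewrite Rabs_mult. pose proof (endpoint_shift_abs_le1 t ht i).
      pose proof (Rabs_pos (r - rho)). nra. }
    pose proof (Rmin_l (gibbs x y 1) (gibbs x y t)).
    pose proof (Rmin_r (gibbs x y 1) (gibbs x y t)).
    destruct (Nat.eq_dec i t) as [->|hit]; [left; lra|].
    destruct (Nat.eq_dec i 1) as [->|hi1]; [left; lra|].
    right. unfold endpoint_shift.
    rewrite (proj2 (Nat.eqb_neq _ _) hit), (proj2 (Nat.eqb_neq _ _) hi1). reflexivity. }
  unfold shifted_gibbs. pose proof (gibbs_pos x y i).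
  destruct hshift as [h | ->]; [apply Rabs_def2 in h|]; lra.
Qed.

Lemma shifted_gibbs_Ptilde :
  exists d, 0 < d /\ forall r, Rabs (r - rho) < d -> Ptilde r t (shifted_gibbs r).
Proof.
  destruct shifted_gibbs_pos as [d [hd hpos]]. exists d. split; [exact hd|].
  intros r hr. destruct (proj1 (xy_eqs_gibbs t rho x y) hsol) as [hsum hmean].
  apply Ptilde_of_pos; [intros; apply hpos; exact hr| |]; unfold shifted_gibbs.
  - rewrite sum_n_m_plus_R, sum_n_m_mult_l_R, hsum, sum_endpoint_shift by exact ht. simpl. ring.
  - rewrite (sum_n_m_ext _
      (fun i => INR i * gibbs x y i + (r - rho) * (INR i * endpoint_shift t i)))
      by (intros i; simpl; ring).
    rewrite sum_n_m_plus_R, sum_n_m_mult_l_R, hmean, mean_endpoint_shift by exact ht. simpl. ring.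
Qed.

Lemma neg_entropy_shifted_gibbs_rho : neg_entropy t (shifted_gibbs rho) = x + rho * y.
Proof.
  rewrite <- (neg_entropy_gibbs t rho x y hsol). unfold neg_entropy.
  apply sum_n_m_ext. intros i. rewrite shifted_gibbs_rho. reflexivity.
Qed.

(* The shift is chosen with total mass 0 and first moment 1, so only the [y]-part of
   [ln (gibbs x y i * dd i) = x + i y] survives. *)
Lemma is_derive_neg_entropy_shifted_gibbs :
  is_derive (fun r => neg_entropy t (shifted_gibbs r)) rho y.
Proof.
  assert (hlog : forall i, ln (shifted_gibbs rho i * dd i) = x + INR i * y).
  { intros i. rewrite shifted_gibbs_rho. unfold gibbs.
    replace (exp (x + INR i * y) / dd i * dd i) with (exp (x + INR i * y))
      by (field; apply Rgt_not_eq, dd_pos).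
    apply ln_exp. }
  replace y
    with (sum_n_m (fun i => endpoint_shift t i * (ln (shifted_gibbs rho i * dd i) + 1)) 1 t).
  - apply is_derive_sum_n_m. intros i _.
    apply is_derive_plogpd; [|rewrite shifted_gibbs_rho; apply gibbs_pos|apply dd_pos].
    unfold shifted_gibbs. auto_derive; [exact I|ring].
  - rewrite (sum_n_m_ext _
      (fun i => (x + 1) * endpoint_shift t i + y * (INR i * endpoint_shift t i)))
      by (intros i; simpl; rewrite hlog; ring).
    rewrite sum_n_m_plus_R, !sum_n_m_mult_l_R, sum_endpoint_shift, mean_endpoint_shift
      by exact ht.
    simpl. ring.
Qed.

End ShiftedGibbs.

Lemma exp_le_compat a b : a <= b -> exp a <= exp b.
Proof. intros [hlt| ->]; [left; apply exp_increasing|right]; auto. Qed.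

(* For [y -> -oo] the lowest-order term [a 1 * exp y] dominates. *)
Lemma exp_sum_neg (a : nat -> R) t :
  (1 <= t)%nat -> a 1%nat < 0 ->
  exists y, sum_n_m (fun i => a i * exp (INR i * y)) 1 t < 0.
Proof.
  intros ht ha1.
  set (M := sum_n_m (fun i => Rabs (a i)) 2 t).
  assert (hM : 0 <= M) by (apply sum_n_m_nonneg; intros; apply Rabs_pos).
  set (z := - a 1%nat / (M - a 1%nat)).
  assert (hz : 0 < z) by (apply Rdiv_lt_0_compat; lra).
  assert (hzM : z * (M - a 1%nat) = - a 1%nat) by (unfold z; field; lra).
  assert (hlnz : ln z <= 0).
  { rewrite <- ln_1. apply ln_le; [exact hz|]. nra. }
  exists (ln z).
  rewrite sum_Sn_m by exact ht. change (plus ?u ?v) with (u + v). simpl INR.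
  assert (hrest : sum_n_m (fun i => a i * exp (INR i * ln z)) 2 t <= (z * z) * M).
  { unfold M. rewrite <- sum_n_m_mult_l_R. apply sum_n_m_le_loc. intros i hi.
    assert (hi2 : 2 <= INR i) by (replace 2 with (INR 2) by (simpl; ring); apply le_INR; lia).
    assert (hexp : exp (INR i * ln z) <= z * z).
    { replace (z * z) with (exp (2 * ln z))
        by (replace (2 * ln z) with (ln z + ln z) by ring; rewrite exp_plus, exp_ln; auto).
      apply exp_le_compat. nra. }
    pose proof (exp_pos (INR i * ln z)). pose proof (Rle_abs (a i)). pose proof (Rabs_pos (a i)).
    nra. }
  rewrite Rmult_1_l, exp_ln by exact hz.
  assert (hdom : a 1%nat * z + z * z * M = z * z * a 1%nat).
  { replace (z * z * M) with (z * (z * (M - a 1%nat)) + z * z * a 1%nat) by ring.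
    rewrite hzM. ring. }
  assert (z * z * a 1%nat < 0) by (assert (0 < z * z) by nra; nra).
  lra.
Qed.

(* For [y -> +oo] the highest-order term [a t * exp (t y)] dominates. *)
Lemma exp_sum_pos (a : nat -> R) t :
  (1 <= t)%nat -> 0 < a t ->
  exists y, 0 < sum_n_m (fun i => a i * exp (INR i * y)) 1 t.
Proof.
  intros ht hat. destruct t as [|s]; [lia|].
  set (M := sum_n_m (fun i => Rabs (a i)) 1 s).
  assert (hM : 0 <= M) by (apply sum_n_m_nonneg; intros; apply Rabs_pos).
  set (z := M / a (S s) + 1).
  assert (0 <= M / a (S s)) by (apply Rdiv_le_0_compat; lra).
  assert (hz : 1 <= z) by (unfold z; lra).
  assert (hlnz : 0 <= ln z) by (rewrite <- ln_1; apply ln_le; lra).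
  exists (ln z).
  rewrite sum_n_Sm by lia. change (plus ?u ?v) with (u + v).
  set (E := exp (INR s * ln z)).
  assert (hrest : - E * M <= sum_n_m (fun i => a i * exp (INR i * ln z)) 1 s).
  { unfold M. rewrite <- sum_n_m_mult_l_R. apply sum_n_m_le_loc. intros i hi.
    assert (hexp : exp (INR i * ln z) <= E).
    { apply exp_le_compat. assert (INR i <= INR s) by (apply le_INR; lia). nra. }
    pose proof (exp_pos (INR i * ln z)). pose proof (Rle_abs (- a i)). rewrite Rabs_Ropp in *.
    pose proof (Rabs_pos (a i)). nra. }
  assert (hlast : exp (INR (S s) * ln z) = E * z)
    by (unfold E; rewrite S_INR, Rmult_plus_distr_r, Rmult_1_l, exp_plus, exp_ln; lra).
  assert (hzat : a (S s) * z = M + a (S s)) by (unfold z; field; lra).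
  assert (0 < E) by apply exp_pos.
  rewrite hlast. nra.
Qed.

Lemma exp_sum_root (a : nat -> R) t :
  (1 <= t)%nat -> a 1%nat < 0 -> 0 < a t ->
  exists y, sum_n_m (fun i => a i * exp (INR i * y)) 1 t = 0.
Proof.
  intros ht ha1 hat.
  destruct (exp_sum_neg a t ht ha1) as [y1 hy1].
  destruct (exp_sum_pos a t ht hat) as [y2 hy2].
  set (F := fun y => sum_n_m (fun i => a i * exp (INR i * y)) 1 t : R).
  assert (hF : forall y, continuous F y).
  { intros y.
    assert (hd : is_derive F y (sum_n_m (fun i => a i * (INR i * exp (INR i * y))) 1 t)).
    { apply (is_derive_sum_n_m (fun i y => a i * exp (INR i * y))).
      intros i _. auto_derive; [exact I|ring]. }
    exact (ex_derive_continuous F y (ex_intro _ _ hd)). }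
  destruct (IVT_gen_consistent F y1 y2 0 hF) as [y [_ hy]].
  - fold (F y1) in hy1. fold (F y2) in hy2.
    split; [apply Rle_trans with (F y1); [apply Rmin_l|lra]
           |apply Rle_trans with (F y2); [lra|apply Rmax_r]].
  - exists y. exact hy.
Qed.

Lemma le_2_of_lt_INR t r : 1 < r < INR t -> (2 <= t)%nat.
Proof.
  intros [h1 h2]. destruct (le_lt_dec 2 t) as [h|h]; [exact h|].
  assert (INR t <= 1) by (apply (le_INR t 1); lia). lra.
Qed.

Lemma xy_eqs_solvable t rho : 1 < rho < INR t -> exists xy, xy_eqs t rho xy.
Proof.
  intros hrho. assert (ht : (1 <= t)%nat) by (pose proof (le_2_of_lt_INR t rho hrho); lia).
  destruct hrho as [h1 ht'].
  destruct (exp_sum_root (fun i => (INR i - rho) / dd i) t ht) as [y hy].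
  - apply Rdiv_neg_pos; [simpl; lra|apply dd_pos].
  - apply Rdiv_lt_0_compat; [lra|apply dd_pos].
  - set (Z := sum_n_m (gibbs 0 y) 1 t).
    assert (hZ : 0 < Z).
    { apply Rlt_le_trans with (gibbs 0 y 1); [apply gibbs_pos|].
      apply sum_n_m_term_le; [intros; left; apply gibbs_pos|lia]. }
    assert (hnorm : forall i, gibbs (- ln Z) y i = / Z * gibbs 0 y i).
    { intros i. unfold gibbs. rewrite exp_plus, exp_Ropp, exp_ln by exact hZ.
      rewrite Rplus_0_l. unfold Rdiv. ring. }
    assert (hmean : sum_n_m (fun i => INR i * gibbs 0 y i) 1 t = rho * Z).
    { rewrite (sum_n_m_ext _ (fun i => INR i * gibbs 0 y i + - rho * gibbs 0 y i))
        in hy by (intros i; unfold gibbs; simpl; rewrite Rplus_0_l; unfold Rdiv; ring).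
      rewrite sum_n_m_plus_R, sum_n_m_mult_l_R in hy. fold Z in hy. lra. }
    exists (- ln Z, y). apply xy_eqs_gibbs.
    rewrite (sum_n_m_ext _ (fun i => / Z * gibbs 0 y i)) by exact hnorm.
    rewrite (sum_n_m_ext (fun i => INR i * gibbs (- ln Z) y i)
                         (fun i => / Z * (INR i * gibbs 0 y i)))
      by (intros i; simpl; rewrite hnorm; ring).
    rewrite !sum_n_m_mult_l_R, hmean. fold Z. split; simpl; field; lra.
Qed.

Lemma xy_t_spec t rho : 1 < rho < INR t -> xy_eqs t rho (x_t t rho, y_t t rho).
Proof.
  intros hrho. unfold x_t, y_t. rewrite <- surjective_pairing. unfold xy_t.
  apply epsilon_spec, xy_eqs_solvable, hrho.
Qed.

Section L0Derivatives.

Variables (t : nat) (rho k x y : R).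
Hypotheses (hrho : 1 < rho) (hk : 0 < k).
Hypothesis hsol : xy_eqs t rho (x, y).

Lemma is_derive_L0_k : is_derive (fun k' => L0 rho k' t) k ((rho - 1) / k).
Proof.
  apply (is_derive_ext (fun k' => L0_lead rho k' - (x + rho * y)));
    [intros k'; symmetry; exact (L0_at_solution t rho k' x y hsol)|].
  unfold L0_lead. auto_derive; [repeat split; nra|field; lra].
Qed.

Lemma is_derive_L0_rho : (2 <= t)%nat -> is_derive (fun r => L0 r k t) rho (ln (rho * k) - y).
Proof.
  intros ht.
  assert (dlead : is_derive (fun r => L0_lead r k) rho (ln (rho * k)))
    by (unfold L0_lead; auto_derive; [repeat split; nra|field; lra]).
  destruct (shifted_gibbs_Ptilde t rho x y ht hsol) as [d [hd hP]].
  apply (is_derive_squeeze _ (fun r => L0_lead r k - neg_entropy t (shifted_gibbs t rho x y r))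
                             (fun r => L0_lead r k - (x + r * y)) rho _ d hd).
  - intros r hr. apply L0_between; [exact (hP r hr)|].
    exact (proj1 (proj1 (xy_eqs_gibbs t rho x y) hsol)).
  - rewrite neg_entropy_shifted_gibbs_rho by exact hsol. symmetry. apply L0_at_solution, hsol.
  - symmetry. apply L0_at_solution, hsol.
  - apply (is_derive_minus (fun r => L0_lead r k)); [exact dlead|].
    exact (is_derive_neg_entropy_shifted_gibbs t rho x y ht).
  - apply (is_derive_minus (fun r => L0_lead r k) (fun r => x + r * y)); [exact dlead|].
    auto_derive; [exact I|ring].
Qed.

End L0Derivatives.

Theorem lemma34 (t : nat) (ht : (0 < t)%nat) (rho k : R)
  (hrho1 : 1 < rho) (hrhot : rho < INR t) (hk : 0 < k) :
  is_derive (fun k' => L0 rho k' t) k ((rho - 1) / k) /\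
  is_derive (fun r => L0 r k t) rho (ln (rho * k) - y_t t rho).
Proof.
  assert (hrho : 1 < rho < INR t) by (split; assumption).
  pose proof (xy_t_spec t rho hrho) as hsol.
  split.
  - exact (is_derive_L0_k t rho k _ _ hrho1 hk hsol).
  - exact (is_derive_L0_rho t rho k _ _ hrho1 hk hsol (le_2_of_lt_INR t rho hrho)).
Qed.
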